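(* Let $\mathcal{I}\subseteq\mathcal{M}_m$ be decreasing, $f\in\mathcal{M}_m\setminus\mathcal{I}$, $h\mid f$ with $\operatorname{ind}(f/h)=\{i_1<\dots<i_\mu\}$. If $|J^{\mathcal{I}}_f(i_j)|>j-1$ for all $j\in\{1,\dots,\mu\}$, then $$\Bigl|\mathrm{LTA}(m,2)^{f,\mathcal{I}}_f\cdot\tfrac fh\Bigr|=2^{\deg(f/h)}\prod_{j=1}^{\deg(f/h)}\Bigl(2^{|J^{\mathcal{I}}_f(i_j)|}-2^{j-1}\Bigr).$$
   Context: $\mathcal{M}_m$: square-free monomials in $x_0,\dots,x_{m-1}$ over $\mathbb{F}_2$; $\operatorname{ind}(u)$ the variable indices of $u$, $\deg u=|\operatorname{ind} u|$; $x_jf/x_i$ denotes $f$ with $x_i$ replaced by $x_j$. Decreasing: for equal-degree monomials with increasing indices, $u\preceq_{sh}v$ iff componentwise $\le$; $u\preceq v$ iff $u\preceq_{sh}v^*\mid v$ for some $v^*$; $\mathcal{I}$ decreasing if $f\in\mathcal{I}$, $g\preceq f\Rightarrow g\in\mathcal{I}$. $J_f^{\mathcal{I}}(i)=\{j\in[0,i): j\notin\operatorname{ind}(f),\ x_jf/x_i\in\mathcal{I}\}$. $\mathrm{LTA}(m,2)$: pairs $(\mathbf{B},\varepsilon)$, $\mathbf{B}=(b_{i,j})$ binary lower unitriangular $m\times m$, $\varepsilon\in\mathbb{F}_2^m$, acting on a monomial $u$ by $x_i\mapsto x_i+\sum_{j<i}b_{i,j}x_j+\varepsilon_i$, $i\in\operatorname{ind}u$.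 $\mathrm{LTA}(m,2)_f$: subgroup with $\varepsilon_i=0$ for $i\notin\operatorname{ind} f$, $b_{i,j}=0$ if $i\notin\operatorname{ind}f$ or $j\in\operatorname{ind}f$. $\mathrm{LTA}(m,2)^{f,\mathcal{I}}_f\cdot\frac fh$ is the set of polynomials $(\mathbf{B},\varepsilon)\cdot\frac fh$ with $(\mathbf{B},\varepsilon)\in\mathrm{LTA}(m,2)_f$ such that $b_{i,j}=0$ for $i\in\operatorname{ind}(f/h)$, $j<i$, $j\notin J^{\mathcal{I}}_f(i)$, and the submatrix of $\mathbf{B}$ with rows $\operatorname{ind}(f/h)$ and columns $J^{\mathcal{I}}_f(i_\mu)$ has rank $\mu$. *)

From mathcomp Require Import all_boot all_order all_algebra.
Set Implicit Arguments. Unset Strict Implicit. Unset Printing Implicit Defensive.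
Import GRing.Theory.
Local Open Scope ring_scope.

(* Square-free monomials in x_0..x_{m-1} are represented by their index set
   ind(u) : {set 'I_m}.  u | v  is  u \subset v,  v / u  is  v :\: u,
   deg u = #|u|.  Polynomials over F_2 are elements of
   F_2[x]/(x_i^2 - x_i), i.e. Boolean functions F_2^m -> F_2. *)

Definition mono (m : nat) := {set 'I_m}.
Definition poly2 (m : nat) := {ffun {ffun 'I_m -> 'F_2} -> 'F_2}.

Definition sidx (m : nat) (u : mono m) : seq nat :=
  sort leq [seq val i | i <- enum u].

Definition sh_le (m : nat) (u v : mono m) : bool :=
  (#|u| == #|v|)%N && all2 leq (sidx u) (sidx v).

Definition mono_le (m : nat) (u v : mono m) : bool :=
  [exists w : mono m, (w \subset v) && sh_le u w].

Definition decreasing (m : nat) (I : {set mono m}) : Prop :=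
  forall f g : mono m, f \in I -> mono_le g f -> g \in I.

Definition Jset (m : nat) (I : {set mono m}) (f : mono m) (i : 'I_m) : {set 'I_m} :=
  [set j : 'I_m | [&& (j < i)%N, j \notin f & ((f :\ i) :|: [set j]) \in I]].

Definition lta_act (m : nat) (B : 'M['F_2]_m) (e : {ffun 'I_m -> 'F_2})
  (u : mono m) : poly2 m :=
  [ffun v : {ffun 'I_m -> 'F_2} =>
     \prod_(i in u) (v i + \sum_(j < m | (j < i)%N) B i j * v j + e i)].

Definition lower_unitri (m : nat) (B : 'M['F_2]_m) : bool :=
  [forall i : 'I_m, B i i == 1] && [forall i : 'I_m, forall j : 'I_m, (i < j)%N ==> (B i j == 0)].

Definition in_LTA_f (m : nat) (f : mono m) (B : 'M['F_2]_m)
  (e : {ffun 'I_m -> 'F_2}) : bool :=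
  [&& lower_unitri B,
      [forall i : 'I_m, (i \notin f) ==> (e i == 0)] &
      [forall i : 'I_m, forall j : 'I_m, ((j < i)%N && ((i \notin f) || (j \in f))) ==> (B i j == 0)]].

Definition subB (m : nat) (B : 'M['F_2]_m) (D C : {set 'I_m}) :
  'M['F_2]_(#|D|, #|C|) :=
  mxsub (fun k : 'I_#|D| => enum_val k) (fun l : 'I_#|C| => enum_val l) B.

Definition in_LTA_fI (m : nat) (I : {set mono m}) (f h : mono m)
  (B : 'M['F_2]_m) (e : {ffun 'I_m -> 'F_2}) : bool :=
  let D := f :\: h in
  [&& in_LTA_f f B e,
      [forall i : 'I_m, forall j : 'I_m,
         [&& i \in D, (j < i)%N & j \notin Jset I f i] ==> (B i j == 0)] &
      (* i_mu = the largest index of f/h *)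
      [forall i : 'I_m, ((i \in D) && [forall k : 'I_m, (k \in D) ==> (k <= i)%N]) ==>
          (\rank (subB B D (Jset I f i)) == #|D|)]].

Definition LTA_orbit (m : nat) (I : {set mono m}) (f h : mono m) : {set poly2 m} :=
  [set p : poly2 m | [exists B : 'M['F_2]_m, exists e : {ffun 'I_m -> 'F_2},
     in_LTA_fI I f h B e && (p == lta_act B e (f :\: h))]].

(* position (0-based) of i in the increasing enumeration of D:
   i = i_{pos+1} *)
Definition pos (m : nat) (D : {set 'I_m}) (i : 'I_m) : nat :=
  #|[set k in D | (k < i)%N]|.

From mathcomp Require Import all_boot all_order all_algebra.
Set Implicit Arguments. Unset Strict Implicit. Unset Printing Implicit Defensive.
Import GRing.Theory.

(* Write D for ind(f/h) and J(i) for J_f^I(i).  An element (B, eps) acts on f/h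
   through the affine forms x_i + sum_(j<i) b_ij x_j + eps_i, i in D, and the
   constraints force b_ij = 0 for j outside J(i); so the orbit is the image of the
   pairs (R, e) with row R_i supported on J(i) and e supported on D.  Since J(i)
   avoids D, distinct pairs give distinct products: at a point that is 1 + e_i +
   R_i.w on D and w elsewhere one product takes the value 1, which pins down every
   affine form of the other.  As I is decreasing, J(i_1) ⊆ ... ⊆ J(i_mu), so the
   rank condition just says that the rows R_i are linearly independent; the row
   R_(i_k) must then avoid the span of the k-1 rows below it, a subspace of
   F_2^J(i_k) with 2^(k-1) elements. *)

Lemma all2_leq_refl (s : seq nat) : all2 leq s s.
Proof. by elim: s => //= y s ->; rewrite leqnn. Qed.

Lemma all2_leq_merge1_cons (y z : nat) (s : seq nat) : z <= y -> path leq z s ->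
  all2 leq (z :: s) (merge leq [:: y] s).
Proof.
elim: s z => [|w s IH] z /= zy; first by rewrite zy.
case/andP=> zw ws; case: ifP => yw /=; first by rewrite zy leqnn all2_leq_refl.
by rewrite zw; apply: IH ws; rewrite ltnW // ltnNge yw.
Qed.

Lemma all2_leq_merge1 (x y : nat) (s : seq nat) : x <= y -> sorted leq s ->
  all2 leq (merge leq [:: x] s) (merge leq [:: y] s).
Proof.
elim: s => [|z s IH] /= xy; first by rewrite xy.
move=> zs; case: ifP => xz; case: ifP => yz /=.
- by rewrite xy leqnn all2_leq_refl.
- by rewrite xz; apply: all2_leq_merge1_cons zs; rewrite ltnW // ltnNge yz.
- by rewrite (leq_trans xy yz) in xz.
- by rewrite leqnn; apply: IH (path_sorted zs).
Qed.

Lemma mem_sidx m (A : {set 'I_m}) (n : nat) : (n \in sidx A) = [exists i in A, val i == n].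
Proof.
rewrite /sidx mem_sort; apply/mapP/existsP => [[i]|[i /andP[iA /eqP<-]]].
  by rewrite mem_enum => iA ->; exists i; rewrite iA eqxx.
by exists i; rewrite ?mem_enum.
Qed.

Lemma sidx_uniq m (A : {set 'I_m}) : uniq (sidx A).
Proof. by rewrite sort_uniq map_inj_uniq ?enum_uniq //; apply: val_inj. Qed.

Lemma sidxU1 m (C : {set 'I_m}) (x : 'I_m) :
  x \notin C -> sidx (x |: C) = merge leq [:: val x] (sidx C).
Proof.
move=> xC; apply: (sorted_eq leq_trans anti_leq).
- exact: (sort_sorted leq_total).
- by apply: (merge_sorted leq_total) => //; exact: (sort_sorted leq_total).
rewrite perm_sym perm_merge /= perm_sym; apply: uniq_perm => [||n]; rewrite ?sidx_uniq //=.
  rewrite mem_sidx sidx_uniq andbT.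
  by apply/existsP => -[i /andP[iC /eqP/val_inj ix]]; rewrite -ix iC in xC.
rewrite in_cons !mem_sidx; apply/existsP/orP => [[i]|].
  rewrite !inE => /andP[/orP[/eqP-> /eqP<-|iC in_]]; first by left.
  by right; apply/existsP; exists i; rewrite iC.
case=> [/eqP->|/existsP[i /andP[iC in_]]]; first by exists x; rewrite !inE !eqxx.
by exists i; rewrite !inE iC orbT.
Qed.

Lemma sh_leU1 m (C : {set 'I_m}) (x y : 'I_m) :
  x \notin C -> y \notin C -> x <= y -> sh_le (x |: C) (y |: C).
Proof.
move=> xC yC xy; rewrite /sh_le !cardsU1 xC yC eqxx !sidxU1 //.
by apply: all2_leq_merge1 => //; exact: (sort_sorted leq_total).
Qed.

Lemma Jset_subset m (I : {set mono m}) (f : mono m) (i i' : 'I_m) :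
  decreasing I -> i \in f -> i' \in f -> i < i' -> Jset I f i \subset Jset I f i'.
Proof.
move=> decI fi fi' ii'; apply/subsetP => j; rewrite !inE => /and3P[ji jf JI].
rewrite (ltn_trans ji ii') jf /=.
have [ne_ii' ne_ji ne_ji'] : [/\ i != i', j != i & j != i'].
  by rewrite !neq_ltn ii' ji (ltn_trans ji ii').
pose C := j |: (f :\: [set i; i']).
have splitC (k k' : 'I_m) : k \in f -> k != k' -> [set i; i'] = [set k; k'] ->
    f :\ k' :|: [set j] = k |: C.
  move=> fk ne_kk' ikk'; apply/setP => l; rewrite /C ikk' !inE.
  by have [->|_] := eqVneq l k; [rewrite ne_kk' fk | rewrite orbC].
have -> : f :\ i' :|: [set j] = i |: C by apply: splitC.
have Ei' : f :\ i :|: [set j] = i' |: C by apply: splitC; rewrite 1?eq_sym // setUC.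
rewrite {}Ei' in JI.
apply: decI JI _; apply/existsP; exists (i' |: C); rewrite subxx.
apply: sh_leU1; last exact: ltnW.
  by rewrite !inE negb_or eq_sym ne_ji eqxx.
by rewrite !inE negb_or eq_sym ne_ji' eqxx orbT.
Qed.

Lemma max_in_set m (D : {set 'I_m}) :
  D != set0 -> exists2 a, a \in D & {in D, forall i : 'I_m, i <= a}.
Proof.
case/set0Pn => i0 i0D; have [a aD a_max] := arg_maxnP (fun i : 'I_m => val i) i0D.
by exists a.
Qed.

Lemma pos_setD1 m (D : {set 'I_m}) (a i : 'I_m) : i < a -> pos (D :\ a) i = pos D i.
Proof.
move=> ia; apply: eq_card => k; rewrite !inE -andbA; case: ltnP => ki; rewrite ?andbF //.
by have -> : k != a by apply: contraTneq ki => ->; rewrite -leqNgt ltnW.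
Qed.

Lemma pos_max m (D : {set 'I_m}) (a : 'I_m) :
  a \in D -> {in D, forall i : 'I_m, i <= a} -> pos D a = #|D :\ a|.
Proof.
move=> aD a_max; apply: eq_card => k; rewrite !inE.
by case kD: (k \in D); rewrite /= ?andbF ?andbT // ltn_neqAle a_max // andbT.
Qed.

Local Open Scope ring_scope.

Lemma addrr_F2 (x : 'F_2) : x + x = 0.
Proof. by apply: addrr_pchar2; apply: pchar_Fp. Qed.

Lemma addrKF2 (x y : 'F_2) : x + y + y = x.
Proof. by rewrite -addrA addrr_F2 addr0. Qed.

Lemma F2_neq0 (x : 'F_2) : x != 0 -> x = 1.
Proof. by case: x => [[|[|]]] //= *; apply/val_inj. Qed.

Lemma F2_addr_eq0 (x y : 'F_2) : x + y = 0 -> x = y.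
Proof. by move/eqP; rewrite addr_eq0 oppr_pchar2 ?pchar_Fp // => /eqP. Qed.

Section RowFamilies.

Variable m : nat.
Local Notation vec := {ffun 'I_m -> 'F_2}.
Local Notation family := {ffun 'I_m -> vec}.
Implicit Types (S D K : {set 'I_m}) (J : 'I_m -> {set 'I_m}) (u v x e : vec) (R : family).

Definition vec_on S : {set vec} := [set v : vec | [forall j, (j \notin S) ==> (v j == 0)]].

Lemma vec_onP S v : reflect (forall j, j \notin S -> v j = 0) (v \in vec_on S).
Proof.
rewrite inE; apply: (iffP forallP) => [vS j jS|vS j]; last by apply/implyP => /vS ->.
by have /implyP/(_ jS)/eqP := vS j.
Qed.

Lemma card_vec_on S : #|vec_on S| = (2 ^ #|S|)%N.
Proof.
have -> : #|vec_on S| = #|pffun_on (0 : 'F_2) S predT|.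
  apply: eq_card => v; apply/vec_onP/pffun_onP => [vS|[vS _] j jS].
    split=> //; apply/subsetP => j; rewrite inE; apply: contraR => /vS ->.
    by rewrite eqxx.
  by apply/eqP; apply: contraR jS => vj; apply: (subsetP vS); rewrite inE.
by rewrite card_pffun_on cardT -cardE card_Fp.
Qed.

Definition comb S u R : vec := [ffun j => \sum_(i in S) u i * R i j].

Lemma eq_comb S u u' R R' :
  {in S, u =1 u'} -> {in S, R =1 R'} -> comb S u R = comb S u' R'.
Proof.
move=> eq_u eq_R; apply/ffunP => j; rewrite !ffunE.
by apply: eq_bigr => i iS; rewrite eq_u ?eq_R.
Qed.

Lemma combD1 S a u R j : a \in S -> comb S u R j = u a * R a j + comb (S :\ a) u R j.
Proof.
move=> aS; rewrite !ffunE (bigD1 a) //=; congr (_ + _).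
by apply: eq_bigl => i; rewrite !inE andbC.
Qed.

Definition free_on S R : bool :=
  [forall u, (u \in vec_on S) ==> (comb S u R == 0) ==> (u == 0)].

Lemma free_onP S R :
  reflect (forall u, u \in vec_on S -> comb S u R = 0 -> u = 0) (free_on S R).
Proof.
apply: (iffP forallP) => [freeR u uS /eqP uR0|freeR u]; last first.
  by apply/implyP => uS; apply/implyP => /eqP /(freeR u uS) ->.
by apply/eqP; have /implyP/(_ uS)/implyP := freeR u; apply.
Qed.

Definition span_on S R : {set vec} := [set comb S u R | u in vec_on S].

Lemma card_span_on S R : free_on S R -> #|span_on S R| = (2 ^ #|S|)%N.
Proof.
move=> /free_onP freeR; rewrite card_in_imset ?card_vec_on // => u u' uS u'S eq_uu'.
apply/eqP; rewrite -subr_eq0; apply/eqP/freeR.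
  by apply/vec_onP => j jS; rewrite !ffunE (vec_onP _ _ uS) ?(vec_onP _ _ u'S) ?subrr.
apply/ffunP => j; have /ffunP/(_ j) := eq_uu'; rewrite !ffunE => eq_j.
by rewrite (eq_bigr (fun i => u i * R i j - u' i * R i j)) ?sumrB ?eq_j ?subrr //
   => i _; rewrite !ffunE mulrBl.
Qed.

Lemma span_on_sub S K J R :
  {in S, forall i, R i \in vec_on (J i)} -> {in S, forall i, J i \subset K} ->
  span_on S R \subset vec_on K.
Proof.
move=> RJ JK; apply/subsetP => _ /imsetP[u _ ->]; apply/vec_onP => j jK.
rewrite ffunE big1 // => i iS; rewrite (vec_onP _ _ (RJ i iS) j) ?mulr0 //.
by apply: contra jK; apply: (subsetP (JK i iS)).
Qed.

Definition set_row a R x : family := [ffun i => if i == a then x else R i].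

Definition family_on D J : {set family} :=
  [set R : family | [forall i, if i \in D then R i \in vec_on (J i) else R i == 0]].

Lemma family_onP D J R :
  reflect ({in D, forall i, R i \in vec_on (J i)} /\ {in [predC D], R =1 fun=> 0})
          (R \in family_on D J).
Proof.
rewrite inE; apply: (iffP forallP) => [RDJ|[RJ R0] i].
  split=> i; [move=> iD | rewrite inE => /negbTE iD]; have := RDJ i; rewrite iD //.
  by move/eqP.
by case: ifPn => [/RJ //|iD]; rewrite R0.
Qed.

Definition free_families D J : {set family} := [set R in family_on D J | free_on D R].

Lemma free_familiesP D J R :
  reflect [/\ {in D, forall i, R i \in vec_on (J i)}, {in [predC D], R =1 fun=> 0}
            & free_on D R]
          (R \in free_families D J).
Proof.
rewrite inE; apply: (iffP andP) => [[/family_onP[RJ R0] freeR] | [RJ R0 freeR]] //.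
by split=> //; apply/family_onP.
Qed.

Lemma free_families0 J : free_families set0 J = [set 0 : family].
Proof.
apply/setP => R; rewrite [RHS]inE; apply/free_familiesP/eqP => [[_ R0 _]|->].
  by apply/ffunP => i; rewrite ffunE R0 // !inE.
split=> [i|i _|]; rewrite ?inE ?ffunE //; apply/free_onP => u /vec_onP u0 _.
by apply/ffunP => i; rewrite ffunE u0 ?inE.
Qed.

Section DropRow.

Variables (D : {set 'I_m}) (J : 'I_m -> {set 'I_m}) (a : 'I_m).
Hypothesis aD : a \in D.

Lemma free_families_drop R :
  R \in free_families D J -> set_row a R 0 \in free_families (D :\ a) J.
Proof.
case/free_familiesP => RJ R0 /free_onP freeR; apply/free_familiesP; split.
- by move=> i /setD1P[ia iD]; rewrite ffunE (negbTE ia) RJ.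
- move=> i; rewrite !inE negb_and negbK ffunE; case: eqP => // _ /= iD.
  by rewrite R0.
apply/free_onP => u uDa uR0; apply: freeR.
  by apply/vec_onP => j jD; apply: (vec_onP _ _ uDa); rewrite !inE negb_and jD orbT.
apply/ffunP => j; rewrite (combD1 _ _ _ aD) (vec_onP _ _ uDa a) ?setD11 // mul0r add0r.
rewrite -[RHS](congr1 (fun v => v j) uR0); congr (_ _ j); apply: eq_comb => // i.
by case/setD1P => /negbTE ia _; rewrite ffunE ia.
Qed.

Lemma free_families_row R : R \in free_families D J ->
  R a \in vec_on (J a) :\: span_on (D :\ a) (set_row a R 0).
Proof.
case/free_familiesP => RJ _ /free_onP freeR; rewrite in_setD RJ // andbT.
apply/imsetP => -[u uDa Ra].
pose u1 : vec := [ffun i => if i == a then 1 else u i].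
have u1D : u1 \in vec_on D.
  apply/vec_onP => j jD; rewrite ffunE; case: eqP => [ja|_]; first by rewrite ja aD in jD.
  by apply: (vec_onP _ _ uDa); rewrite !inE negb_and jD orbT.
have /(freeR u1 u1D)/ffunP/(_ a)/eqP : comb D u1 R = 0.
  apply/ffunP => j; rewrite (combD1 _ _ _ aD) Ra [u1 a]ffunE eqxx mul1r.
  rewrite (@eq_comb _ _ u _ (set_row a R 0)) ?addrr_F2 ?ffunE //
    => i /setD1P[/negbTE ia _]; by rewrite !ffunE ia.
by rewrite !ffunE eqxx oner_eq0.
Qed.

Lemma free_families_set_row R x : R \in free_families (D :\ a) J ->
  x \in vec_on (J a) :\: span_on (D :\ a) R -> set_row a R x \in free_families D J.
Proof.
case/free_familiesP => RJ R0 /free_onP freeR /setDP[xJ xspan].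
apply/free_familiesP; split.
- move=> i iD; rewrite ffunE; case: eqP => [-> //|/eqP ia].
  by rewrite RJ // !inE ia.
- move=> i; rewrite inE => iD; rewrite ffunE; case: eqP => [ia|_].
    by rewrite ia aD in iD.
  by rewrite R0 // !inE negb_and iD orbT.
apply/free_onP => u uD uR0.
pose u' : vec := [ffun i => if i == a then 0 else u i].
have u'Da : u' \in vec_on (D :\ a).
  apply/vec_onP => j; rewrite !inE negb_and negbK ffunE.
  by case: eqP => //= _ jD; apply: (vec_onP _ _ uD).
have combE : comb (D :\ a) u (set_row a R x) = comb (D :\ a) u' R.
  by apply: eq_comb => i /setD1P[/negbTE ia _]; rewrite !ffunE ia.
have uR0_at j : u a * x j + comb (D :\ a) u' R j = 0.
  have := congr1 (fun v : vec => v j) uR0.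
  by rewrite /= (combD1 _ _ _ aD) combE [set_row a R x a]ffunE eqxx [(0 : vec) j]ffunE.
have [ua0|/F2_neq0 ua1] := eqVneq (u a) 0.
  have u'0 : u' = 0.
    apply: freeR => //; apply/ffunP => j.
    by rewrite -[LHS]add0r -(mul0r (x j)) -ua0 uR0_at ffunE.
  apply/ffunP => i; have := congr1 (fun v => v i) u'0; rewrite !ffunE.
  by case: eqP => [->|].
case/negP: xspan; apply/imsetP; exists u' => //; apply/ffunP => j.
by apply: F2_addr_eq0; rewrite -[x j]mul1r -ua1 uR0_at.
Qed.

End DropRow.

Lemma card_free_families_fiber D J a R :
  a \in D -> {in D :\ a, forall i, J i \subset J a} -> R \in free_families (D :\ a) J ->
  #|[set R' in free_families D J | set_row a R' 0 == R]| = (2 ^ #|J a| - 2 ^ #|D :\ a|)%N.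
Proof.
move=> aD JJa RDa.
have -> : [set R' in free_families D J | set_row a R' 0 == R] =
          set_row a R @: (vec_on (J a) :\: span_on (D :\ a) R).
  apply/setP => R'; rewrite inE; apply/andP/imsetP => [[R'D /eqP<-]|[x x_new ->]].
    exists (R' a); first exact: free_families_row.
    by apply/ffunP => i; rewrite !ffunE; case: eqP => // ->.
  split; first exact: free_families_set_row.
  case/free_familiesP: RDa => _ R0 _; apply/eqP/ffunP => i; rewrite !ffunE.
  by case: eqP => // ->; rewrite R0 // !inE eqxx.
rewrite card_imset => [|x y /(congr1 (fun R' : family => R' a))]; last first.
  by rewrite !ffunE eqxx.
case/free_familiesP: RDa => RJ _ freeR.
rewrite (cardsD (vec_on _)) (setIidPr _) ?card_vec_on ?card_span_on //.
exact: span_on_sub RJ JJa.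
Qed.

Lemma card_free_families D J :
  {in D &, forall i i' : 'I_m, (i < i')%N -> J i \subset J i'} ->
  #|free_families D J| = (\prod_(i in D) (2 ^ #|J i| - 2 ^ pos D i))%N.
Proof.
elim: {D}#|D| {-2}D (erefl #|D|) => [|n IH] D cardD Jmono.
  by rewrite (cards0_eq cardD) big_set0 free_families0 cards1.
have /max_in_set[a aD a_max] : D != set0 by rewrite -card_gt0 cardD.
have lt_a i : i \in D :\ a -> (i < a)%N.
  by case/setD1P => ia iD; rewrite ltn_neqAle a_max // andbT.
have JJa : {in D :\ a, forall i, J i \subset J a}.
  by move=> i iDa; apply: Jmono (lt_a i iDa); case/setD1P: iDa.
rewrite -sum1_card (partition_big (set_row a ^~ 0) [in free_families (D :\ a) J]) /=;
  last by move=> R; apply: free_families_drop.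
rewrite (eq_bigr (fun _ => 2 ^ #|J a| - 2 ^ #|D :\ a|)%N) => [|R RDa]; last first.
  rewrite sum1dep_card -(card_free_families_fiber aD JJa RDa).
  by apply: eq_card => R'; rewrite inE.
have cardDa : #|D :\ a| = n by move: cardD; rewrite (cardsD1 a) aD => -[].
rewrite sum_nat_const IH //; last by move=> i i' /setD1P[_ iD] /setD1P[_ i'D]; apply: Jmono.
rewrite (bigD1 a aD) mulnC /= pos_max //; congr (_ * _)%N.
apply: eq_big => [i|i iDa]; first by rewrite !inE andbC.
by rewrite pos_setD1 // lt_a.
Qed.

Lemma row_free_subB D K J (B : 'M['F_2]_m) R :
  {in D, forall i, R i \in vec_on (J i)} -> {in D, forall i, J i \subset K} ->
  {in D & K, forall i j, B i j = R i j} ->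
  row_free (subB B D K) = free_on D R.
Proof.
move=> RJ JK BR; apply/idP/free_onP => [freeB u uD uR0|freeR].
  pose u' : 'rV_#|D| := \row_k u (enum_val k).
  have : u' *m subB B D K == 0.
    apply/eqP/rowP => l; have := congr1 (fun v : vec => v (enum_val l)) uR0.
    rewrite !mxE !ffunE (big_enum_val (fun i => u i * R i (enum_val l))) /= => u_l.
    rewrite -[RHS]u_l.
    by apply: eq_bigr => k _; rewrite !mxE BR //; apply: enum_valP.
  rewrite mulmx_free_eq0 // => /eqP u'0.
  apply/ffunP => i; rewrite ffunE; have [iD|iD] := boolP (i \in D); last first.
    exact: (vec_onP _ _ uD).
  have := congr1 (fun M : 'rV_#|D| => M 0 (enum_rank_in iD i)) u'0.
  by rewrite !mxE enum_rankK_in.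
rewrite -kermx_eq0; apply/rowV0P => u'; rewrite sub_kermx => /eqP u'B0.
pose u : vec := [ffun i => if [pick k | enum_val k == i] is Some k then u' 0 k else 0].
have uE k : u (enum_val k) = u' 0 k.
  rewrite ffunE; case: pickP => [k' /eqP/enum_val_inj -> //|/(_ k)].
  by rewrite eqxx.
have uD : u \in vec_on D.
  apply/vec_onP => i iD; rewrite ffunE; case: pickP => // k /eqP ek.
  by rewrite -ek enum_valP in iD.
suff /(freeR u uD) u0 : comb D u R = 0.
  apply/rowP => k; have := congr1 (fun v : vec => v (enum_val k)) u0.
  by rewrite uE !ffunE mxE.
apply/ffunP => j; rewrite !ffunE (big_enum_val (fun i => u i * R i j)) /=.
have [jK|jK] := boolP (j \in K).
  have := congr1 (fun M : 'rV_#|K| => M 0 (enum_rank_in jK j)) u'B0.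
  rewrite !mxE => u_j; rewrite -[RHS]u_j; apply: eq_bigr => k _.
  by rewrite uE !mxE enum_rankK_in // BR //; apply: enum_valP.
rewrite big1 // => k _; rewrite (vec_onP _ _ (RJ _ (enum_valP k)) j) ?mulr0 //.
by apply: contra jK; apply: (subsetP (JK _ (enum_valP k))).
Qed.

Lemma free_on0 R : free_on set0 R.
Proof. by apply/free_onP => u /vec_onP u0 _; apply/ffunP => i; rewrite u0 ?inE ?ffunE. Qed.

(* The left-hand side is the rank condition of [in_LTA_fI]. *)
Lemma max_rank_free D K J (B : 'M['F_2]_m) R :
  {in D &, forall i i' : 'I_m, (i < i')%N -> J i \subset J i'} ->
  {in D, forall i, R i \in vec_on (J i)} -> {in D, forall i, J i \subset K} ->
  {in D & K, forall i j, B i j = R i j} ->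
  [forall i : 'I_m, (i \in D) && [forall k : 'I_m, (k \in D) ==> (k <= i)%N]
                    ==> (\rank (subB B D (J i)) == #|D|)] = free_on D R.
Proof.
move=> Jmono RJ JK BR; have [->|/max_in_set[a aD a_max]] := eqVneq D set0.
  by rewrite free_on0; apply/forallP => i; rewrite inE.
have JJa : {in D, forall i, J i \subset J a}.
  move=> i iD; have [ia|ai|/val_inj->] := ltngtP i a; first exact: Jmono.
    by rewrite ltnNge a_max in ai.
  exact: subxx.
have BRa : {in D & J a, forall i j, B i j = R i j}.
  by move=> i j iD /(subsetP (JK a aD)); apply: BR.
rewrite -(row_free_subB RJ JJa BRa).
apply/forallP/idP => [/(_ a)/implyP|rankB i].
  apply; rewrite aD; apply/forallP => k; apply/implyP => kD; exact: a_max.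
apply/implyP => /andP[iD /forallP i_max]; suff -> : i = a by [].
by apply/val_inj/eqP; rewrite eqn_leq a_max //=; have /implyP := i_max a; apply.
Qed.

Definition affine_prod D R e : poly2 m :=
  [ffun v : vec => \prod_(i in D) (v i + \sum_j R i j * v j + e i)].

Lemma affine_prod_inj D J : {in D, forall i, [disjoint J i & D]} ->
  {in setX (family_on D J) (vec_on D) &,
    injective (fun p : family * vec => affine_prod D p.1 p.2)}.
Proof.
move=> JD [R e] [R' e'] /setXP[/family_onP[RJ R0] eD] /setXP[/family_onP[R'J R'0] e'D].
move=> /= eq_RR'.
have formE w : {in D, forall i, e i + \sum_j R i j * w j = e' i + \sum_j R' i j * w j}.
  move=> i iD.
  pose w1 : vec := [ffun k => if k \in D then 1 + e k + \sum_j R k j * w j else w k].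
  have dotE k Q : k \in D -> Q \in vec_on (J k) -> \sum_j Q j * w1 j = \sum_j Q j * w j.
    move=> kD /vec_onP QJ; apply: eq_bigr => j _; rewrite ffunE; case: ifPn => // jD.
    by rewrite QJ ?mul0r // (disjointFl (JD k kD) jD).
  have : affine_prod D R' e' w1 != 0.
    rewrite -eq_RR' ffunE big1 ?oner_eq0 // => k kD.
    by rewrite (dotE k) ?RJ // ffunE kD !addrKF2.
  rewrite ffunE => /prodf_neq0/(_ i iD)/F2_neq0; rewrite (dotE i) ?R'J // ffunE iD.
  rewrite -!addrA -[RHS]addr0 => /addrI; rewrite addrA => /F2_addr_eq0 ->.
  by rewrite addrC.
have eq_ee' : e = e'.
  apply/ffunP => i; have [iD|iD] := boolP (i \in D); last first.
    by rewrite (vec_onP _ _ eD) ?(vec_onP _ _ e'D).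
  by have := formE (0 : vec) i iD; rewrite !big1 ?addr0 // => j _; rewrite ffunE mulr0.
congr pair; last exact: eq_ee'.
apply/ffunP => i; have [iD|iD] := boolP (i \in D); last first.
  by move: (R0 i iD) (R'0 i iD) => /= -> ->.
apply/ffunP => k; pose delta_k : vec := [ffun j => (j == k)%:R].
have dot_delta (Q : vec) : \sum_j Q j * delta_k j = Q k.
  rewrite (bigD1 k) //= ffunE eqxx mulr1 big1 ?addr0 // => j /negbTE jk.
  by rewrite ffunE jk mulr0.
by have := formE delta_k i iD; rewrite eq_ee' !dot_delta => /addrI.
Qed.

Lemma lta_act_affine_prod D (B : 'M['F_2]_m) e R e' :
  {in D, e =1 e'} -> {in D, forall i j : 'I_m, (j < i)%N -> B i j = R i j} ->
  {in D, forall i j : 'I_m, (i <= j)%N -> R i j = 0} ->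
  lta_act B e D = affine_prod D R e'.
Proof.
move=> ee' BR R0; apply/ffunP => v; rewrite !ffunE; apply: eq_bigr => i iD.
rewrite ee' //; congr (_ + _ + _); rewrite big_mkcond; apply: eq_bigr => j _ /=.
by case: ltnP => [ji|ij]; [rewrite BR | rewrite R0 ?mul0r].
Qed.

End RowFamilies.

Section Orbit.

Variables (m : nat) (I : {set mono m}) (f h : mono m).
Hypothesis decI : decreasing I.
Local Notation D := (f :\: h).
Local Notation J := (Jset I f).
Local Notation vec := {ffun 'I_m -> 'F_2}.
Local Notation family := {ffun 'I_m -> vec}.

Lemma mem_Jset i j : j \in J i -> (j < i)%N && (j \notin f).
Proof. by rewrite inE => /and3P[-> ->]. Qed.

Lemma Jset_monotone : {in D &, forall i i' : 'I_m, (i < i')%N -> J i \subset J i'}.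
Proof. by move=> i i' /setDP[fi _] /setDP[fi' _]; apply: Jset_subset. Qed.

Lemma disjoint_Jset_D : {in D, forall i, [disjoint J i & D]}.
Proof.
move=> i _; apply/pred0P => j /=; apply/negP => /andP[/mem_Jset/andP[_ jf] /setDP[fj _]].
by rewrite fj in jf.
Qed.

Lemma Jset_sub_setC : {in D, forall i, J i \subset ~: f}.
Proof. by move=> i _; apply/subsetP => j /mem_Jset/andP[_ jf]; rewrite inE. Qed.

Lemma in_LTA_fI_affine_prod (B : 'M['F_2]_m) (e : vec) : in_LTA_fI I f h B e ->
  exists2 p, p \in setX (free_families D J) (vec_on D)
           & lta_act B e D = affine_prod D p.1 p.2.
Proof.
case/and3P => /and3P[/andP[_ /forallP Bup] _ _] /forallP BJ rankB.
have B0 (i j : 'I_m) : i \in D -> (j < i)%N -> j \notin J i -> B i j = 0.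
  by move=> iD ji jJ; apply/eqP; have /forallP/(_ j)/implyP := BJ i; apply; rewrite iD ji.
pose R : family := [ffun i => [ffun j => if (i \in D) && (j \in J i) then B i j else 0]].
pose e' : vec := [ffun i => if i \in D then e i else 0].
have RJ : {in D, forall i, R i \in vec_on (J i)}.
  by move=> i iD; apply/vec_onP => j /negbTE jJ; rewrite !ffunE iD jJ.
have BR : {in D & ~: f, forall i j, B i j = R i j}.
  move=> i j iD; rewrite inE => jf; rewrite !ffunE iD /=; case: ifPn => // jJ.
  have [ji|ij|/val_inj ji] := ltngtP j i; first exact: B0.
    by apply/eqP; have /forallP/(_ j)/implyP := Bup i; apply.
  by case/setDP: iD => fi _; rewrite ji fi in jf.
exists (R, e'); last first.
  apply: lta_act_affine_prod => [i iD|i iD j ji|i iD j ij]; rewrite !ffunE ?iD //=.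
    by case: ifPn => [//|/(B0 i j iD ji)].
  by case: ifP => // /mem_Jset/andP[ji _]; rewrite ltnNge ij in ji.
rewrite inE /=; apply/andP; split; last by apply/vec_onP => i /negbTE iD; rewrite ffunE iD.
apply/free_familiesP; split => // [i|].
  by rewrite inE => /negbTE iD; apply/ffunP => j; rewrite !ffunE iD.
by rewrite -(max_rank_free Jset_monotone RJ Jset_sub_setC BR).
Qed.

Lemma affine_prod_in_LTA_orbit R (e : vec) :
  R \in free_families D J -> e \in vec_on D -> affine_prod D R e \in LTA_orbit I f h.
Proof.
move=> RDJ eD; have /free_familiesP[RJ R0 freeR] := RDJ.
have R_Jset (i j : 'I_m) : R i j != 0 -> (i \in D) && (j \in J i).
  have [iD|iD] := boolP (i \in D); last by move: (R0 i iD) => /= ->; rewrite ffunE eqxx.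
  by apply: contraNT => /(vec_onP _ _ (RJ i iD)) ->.
pose B : 'M['F_2]_m := \matrix_(i, j) if i == j then 1 else R i j.
have B_lt (i j : 'I_m) : (j < i)%N -> B i j = R i j.
  by move=> ji; rewrite mxE; case: eqP => // ij; rewrite ij ltnn in ji.
have R_lt (i j : 'I_m) : R i j != 0 -> (j < i)%N && (j \notin f).
  by case/R_Jset/andP => _ /mem_Jset.
have R_ge (i j : 'I_m) : (i <= j)%N -> R i j = 0.
  by move=> ij; apply/eqP; apply: contraLR ij => /R_lt/andP[ji _]; rewrite -ltnNge.
have B_ge (i j : 'I_m) : (i < j)%N -> B i j = 0.
  move=> ij; rewrite mxE; case: eqP => [eij|_]; first by rewrite eij ltnn in ij.
  by rewrite R_ge // ltnW.
rewrite inE; apply/existsP; exists B; apply/existsP; exists e; apply/andP; split; last first.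
  by apply/eqP/esym; apply: lta_act_affine_prod => [|i _ j /B_lt|i _ j /R_ge].
apply/and3P; split.
- apply/and3P; split.
  + apply/andP; split; apply/forallP => i; first by rewrite mxE eqxx.
    by apply/forallP => j; apply/implyP => /B_ge ->.
  + apply/forallP => i; apply/implyP => fi; apply/eqP/(vec_onP _ _ eD).
    by apply: contra fi => /setDP[].
  + apply/forallP => i; apply/forallP => j; apply/implyP => /andP[ji jf]; rewrite B_lt //.
    apply: contraTT jf => /R_Jset/andP[/setDP[fi _] /mem_Jset/andP[_ jnf]].
    by rewrite negb_or negbK fi.
- apply/forallP => i; apply/forallP => j; apply/implyP => /and3P[iD ji jJ].
  by rewrite B_lt //; apply: contraTT jJ => /R_Jset/andP[_ ->].
have BR : {in D & ~: f, forall i j, B i j = R i j}.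
  move=> i j iD; rewrite inE => jf; rewrite mxE; case: eqP => // eij.
  by case/setDP: iD => fi _; rewrite -eij fi in jf.
by rewrite (max_rank_free Jset_monotone RJ Jset_sub_setC BR).
Qed.

Lemma LTA_orbitE :
  LTA_orbit I f h = [set affine_prod D p.1 p.2 | p in setX (free_families D J) (vec_on D)].
Proof.
apply/setP => P; apply/idP/imsetP => [|[[R e] /setXP[RDJ eD] ->]].
  rewrite inE => /existsP[B /existsP[e /andP[/in_LTA_fI_affine_prod[p pDJ actE] /eqP->]]].
  by exists p.
exact: affine_prod_in_LTA_orbit.
Qed.

Lemma card_LTA_orbit : #|LTA_orbit I f h| = (#|free_families D J| * 2 ^ #|D|)%N.
Proof.
rewrite LTA_orbitE card_in_imset ?cardsX ?card_vec_on //.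
apply: sub_in2 (affine_prod_inj disjoint_Jset_D) => -[R e] /setXP[/setIdP[RDJ _] eD].
by apply/setXP.
Qed.

End Orbit.

Theorem proposition6 (m : nat) (I : {set mono m}) (f h : mono m) :
  decreasing I ->
  f \notin I ->
  h \subset f ->
  (forall i : 'I_m, i \in f :\: h -> (pos (f :\: h) i < #|Jset I f i|)%N) ->
  #|LTA_orbit I f h| =
    (2 ^ #|f :\: h| *
     \prod_(i in f :\: h) (2 ^ #|Jset I f i| - 2 ^ pos (f :\: h) i))%N.
Proof.
move=> decI _ _ _.
rewrite card_LTA_orbit // card_free_families 1?mulnC //; exact: Jset_monotone.
Qed.
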